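(* Let $(\mathcal C,\otimes,\sigma,I,(\,)^* )$ be a compact closed category. An object $R$ of $\mathcal C$ is (extensionally) reflexive if and only if $R$ is both self-dual and self-similar.
   Context: In a compact closed category the internal hom is $[A\to B]=A^*\otimes B$. An object $R$ is (extensionally) reflexive if $R\cong[R\to R]$, i.e. there are mutually inverse isomorphisms $\mathrm{app}:R\to[R\to R]$ and $\mathrm{lam}:[R\to R]\to R$. An object $N$ is self-similar if $N\cong N\otimes N$ (the isomorphisms $N\otimes N\to N$ and $N\to N\otimes N$ are called code and decode arrows). An object $S$ is self-dual if $S\cong S^*$. *)

Set Implicit Arguments.
Unset Strict Implicit.

Record Category := {
  ob : Type;
  hom : ob -> ob -> Type;
  idm : forall A, hom A A;
  comp : forall A B C, hom B C -> hom A B -> hom A C;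
  comp_assoc : forall A B C D (h : hom C D) (g : hom B C) (f : hom A B),
      comp h (comp g f) = comp (comp h g) f;
  comp_id_l : forall A B (f : hom A B), comp (idm B) f = f;
  comp_id_r : forall A B (f : hom A B), comp f (idm A) = f
}.
Arguments idm {c} A.
Arguments comp {c A B C} _ _.
Coercion ob : Category >-> Sortclass.

Notation "g \o' f" := (comp g f) (at level 40, left associativity).

Definition iso (C : Category) (A B : C) : Prop :=
  exists (f : hom A B) (g : hom B A), g \o' f = idm A /\ f \o' g = idm B.

Record SymMonoidal (C : Category) := {
  tens : C -> C -> C;
  tensh : forall A B A' B', hom A B -> hom A' B' -> hom (tens A A') (tens B B');
  tens_id : forall A B, tensh (idm A) (idm B) = idm (tens A B);
  tens_comp : forall A B D A' B' D' (g : hom B D) (f : hom A B)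
                     (g' : hom B' D') (f' : hom A' B'),
      tensh (g \o' f) (g' \o' f') = tensh g g' \o' tensh f f';
  unitI : C;
  assoc : forall A B D, hom (tens (tens A B) D) (tens A (tens B D));
  assoc_inv : forall A B D, hom (tens A (tens B D)) (tens (tens A B) D);
  assoc_iso1 : forall A B D, assoc_inv A B D \o' assoc A B D = idm _;
  assoc_iso2 : forall A B D, assoc A B D \o' assoc_inv A B D = idm _;
  assoc_nat : forall A B D A' B' D' (f : hom A A') (g : hom B B') (h : hom D D'),
      assoc A' B' D' \o' tensh (tensh f g) h = tensh f (tensh g h) \o' assoc A B D;
  lunit : forall A, hom (tens unitI A) A;
  lunit_inv : forall A, hom A (tens unitI A);
  lunit_iso1 : forall A, lunit_inv A \o' lunit A = idm _;
  lunit_iso2 : forall A, lunit A \o' lunit_inv A = idm _;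
  lunit_nat : forall A B (f : hom A B),
      lunit B \o' tensh (idm unitI) f = f \o' lunit A;
  runit : forall A, hom (tens A unitI) A;
  runit_inv : forall A, hom A (tens A unitI);
  runit_iso1 : forall A, runit_inv A \o' runit A = idm _;
  runit_iso2 : forall A, runit A \o' runit_inv A = idm _;
  runit_nat : forall A B (f : hom A B),
      runit B \o' tensh f (idm unitI) = f \o' runit A;
  sym : forall A B, hom (tens A B) (tens B A);
  sym_nat : forall A B A' B' (f : hom A A') (g : hom B B'),
      sym A' B' \o' tensh f g = tensh g f \o' sym A B;
  sym_inv : forall A B, sym B A \o' sym A B = idm _;
  pentagon : forall A B D E,
      assoc A B (tens D E) \o' assoc (tens A B) D E
      = tensh (idm A) (assoc B D E) \o' assoc A (tens B D) E
          \o' tensh (assoc A B D) (idm E);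
  triangle : forall A B,
      tensh (idm A) (lunit B) \o' assoc A unitI B = tensh (runit A) (idm B);
  hexagon : forall A B D,
      assoc B D A \o' sym A (tens B D) \o' assoc A B D
      = tensh (idm B) (sym A D) \o' assoc B A D \o' tensh (sym A B) (idm D)
}.

Record CompactClosed (C : Category) (M : SymMonoidal C) := {
  dual : C -> C;
  eta : forall A, hom (unitI M) (tens M (dual A) A);
  eps : forall A, hom (tens M A (dual A)) (unitI M);
  snake1 : forall A,
      lunit M A \o' tensh M (eps A) (idm A) \o' assoc_inv M A (dual A) A
        \o' tensh M (idm A) (eta A) \o' runit_inv M A = idm A;
  snake2 : forall A,
      runit M (dual A) \o' tensh M (idm (dual A)) (eps A)
        \o' assoc M (dual A) A (dual A)
        \o' tensh M (eta A) (idm (dual A)) \o' lunit_inv M (dual A)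
      = idm (dual A)
}.

Definition ihom (C : Category) (M : SymMonoidal C) (K : CompactClosed M)
  (A B : C) : C := tens M (dual K A) B.

Definition reflexive (C : Category) (M : SymMonoidal C) (K : CompactClosed M)
  (R : C) : Prop := iso R (ihom K R R).

Definition self_similar (C : Category) (M : SymMonoidal C) (N : C) : Prop :=
  iso N (tens M N N).

Definition self_dual (C : Category) (M : SymMonoidal C) (K : CompactClosed M)
  (S : C) : Prop := iso S (dual K S).

(* In a compact closed category the internal hom [A -> Y] = A^* (x) Y has the
   universal property  hom(X, A^* (x) Y) = hom(A (x) X, Y)  naturally in X, and
   hom(X, B) = hom(X (x) B^*, I).  Chaining these, the object [R -> R] is also an
   internal hom [(R^* (x) R) -> I]; if R is isomorphic to R^* (x) R, it is
   therefore an internal hom [R -> I], as is R^* (x) I.  Internal homs being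
   unique up to isomorphism, R = R^* (x) R = R^* (x) I = R^*.  Given
   self-duality, both reflexivity and self-similarity say R = R (x) R. *)

Section CompactClosed.
Context {C : Category} {M : SymMonoidal C} (K : CompactClosed M).

Local Notation "f <x> g" := (tensh M f g) (at level 35).
Local Notation "'1'" := (idm _).
Local Notation T := (tens M).
Local Notation I := (unitI M).
Local Notation "A ^*" := (dual K A) (at level 2).
Local Notation al := (assoc M).
Local Notation ali := (assoc_inv M).
Local Notation la := (lunit M).
Local Notation lai := (lunit_inv M).
Local Notation ra := (runit M).
Local Notation rai := (runit_inv M).
Local Notation ep := (eps K).
Local Notation et := (eta K).

(* Composites are kept left-associated; [crewrite H] rewrites with an
   equation [H] between such composites of up to three arrows occurring
   anywhere in the chain. *)
Lemma comp_rewrite2 {A B D E : C} {w : hom D E} {x : hom B D} {y : hom A B} {z} :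
  x \o' y = z -> w \o' x \o' y = w \o' z.
Proof. intros H; rewrite <- H; symmetry; apply comp_assoc. Qed.

Lemma comp_rewrite3 {A B D E F : C} {w : hom E F} {x : hom D E} {y : hom B D}
  {v : hom A B} {z} :
  x \o' y \o' v = z -> w \o' x \o' y \o' v = w \o' z.
Proof. intros H; rewrite <- H, !comp_assoc; reflexivity. Qed.

Ltac reassoc := repeat rewrite comp_assoc.
Ltac crewrite H :=
  first [rewrite (comp_rewrite2 H) | rewrite (comp_rewrite3 H) | rewrite H]; reassoc.
Ltac crewrite_rev H := let H' := constr:(eq_sym H) in crewrite H'.

Lemma split_mono_cancel {A B D : C} (p : hom B D) (p' : hom D B) (f g : hom A B) :
  p' \o' p = 1 -> p \o' f = p \o' g -> f = g.
Proof.
  intros Hp Hfg. rewrite <- (comp_id_l f), <- (comp_id_l g), <- Hp.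
  rewrite <- !comp_assoc, Hfg. reflexivity.
Qed.

Lemma split_epi_cancel {A B D : C} (p : hom A B) (p' : hom B A) (f g : hom B D) :
  p \o' p' = 1 -> f \o' p = g \o' p -> f = g.
Proof.
  intros Hp Hfg. rewrite <- (comp_id_r f), <- (comp_id_r g), <- Hp. reassoc.
  rewrite Hfg. reflexivity.
Qed.

Lemma comp_eq_id_r {A B : C} (g : hom A B) (k : hom A A) : k = 1 -> g \o' k = g.
Proof. intros ->. apply comp_id_r. Qed.

Lemma inverse_naturality {A B A' B' : C} (p : hom A A') (p' : hom A' A)
  (q : hom B B') (q' : hom B' B) (X : hom A B) (Y : hom A' B') :
  p \o' p' = 1 -> q' \o' q = 1 -> q \o' X = Y \o' p -> q' \o' Y = X \o' p'.
Proof.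
  intros Hp Hq HXY.
  rewrite <- (comp_id_r (q' \o' Y)), <- Hp. reassoc.
  rewrite <- (comp_assoc q' Y p), <- HXY. reassoc. rewrite Hq, comp_id_l. reflexivity.
Qed.

Lemma tens_comp_l {A B D E : C} (g : hom B D) (f : hom A B) :
  (g \o' f) <x> idm E = (g <x> 1) \o' (f <x> 1).
Proof. rewrite <- tens_comp, comp_id_l; reflexivity. Qed.

Lemma tens_comp_r {A B D E : C} (g : hom B D) (f : hom A B) :
  idm E <x> (g \o' f) = (1 <x> g) \o' (1 <x> f).
Proof. rewrite <- tens_comp, comp_id_l; reflexivity. Qed.

Lemma tens_interchange {A B A' B' : C} (f : hom A B) (g : hom A' B') :
  (idm B <x> g) \o' (f <x> idm A') = (f <x> idm B') \o' (idm A <x> g).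
Proof. rewrite <- !tens_comp, !comp_id_l, !comp_id_r. reflexivity. Qed.

Lemma tens_inverse_l {A B : C} (E : C) (f : hom A B) (g : hom B A) :
  f \o' g = 1 -> (f <x> idm E) \o' (g <x> idm E) = 1.
Proof. intros H. rewrite <- tens_comp, H, comp_id_l. apply tens_id. Qed.

Lemma tens_inverse_r {A B : C} (E : C) (f : hom A B) (g : hom B A) :
  f \o' g = 1 -> (idm E <x> f) \o' (idm E <x> g) = 1.
Proof. intros H. rewrite <- tens_comp, H, comp_id_l. apply tens_id. Qed.

Lemma iso_refl (A : C) : iso A A.
Proof. exists (idm A), (idm A). split; apply comp_id_l. Qed.

Lemma iso_sym {A B : C} : iso A B -> iso B A.
Proof. intros [f [g [H1 H2]]]. exists g, f. split; assumption. Qed.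

Lemma iso_trans {A B D : C} : iso A B -> iso B D -> iso A D.
Proof.
  intros [f [g [H1 H2]]] [f' [g' [H1' H2']]]. exists (f' \o' f), (g \o' g'). split.
  - rewrite comp_assoc, <- (comp_assoc g g' f'), H1', comp_id_r. assumption.
  - rewrite comp_assoc, <- (comp_assoc f' f g), H2, comp_id_r. assumption.
Qed.

Lemma iso_tens {A B A' B' : C} : iso A B -> iso A' B' -> iso (T A A') (T B B').
Proof.
  intros [f [g [H1 H2]]] [f' [g' [H1' H2']]]. exists (f <x> f'), (g <x> g'). split.
  - rewrite <- tens_comp, H1, H1'. apply tens_id.
  - rewrite <- tens_comp, H2, H2'. apply tens_id.
Qed.

Lemma iso_runit (A : C) : iso (T A I) A.
Proof. exists (ra A), (rai A). split; [apply runit_iso1 | apply runit_iso2]. Qed.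

(** * Monoidal coherence *)

Lemma assoc_inv_nat {A B D A' B' D' : C} (f : hom A A') (g : hom B B') (h : hom D D') :
  ali A' B' D' \o' (f <x> (g <x> h)) = ((f <x> g) <x> h) \o' ali A B D.
Proof.
  apply inverse_naturality with (p := al A B D) (q := al A' B' D').
  - apply assoc_iso2.
  - apply assoc_iso1.
  - apply assoc_nat.
Qed.

Lemma lunit_inv_nat {A B : C} (f : hom A B) : lai B \o' f = (idm I <x> f) \o' lai A.
Proof.
  apply inverse_naturality with (p := la A) (q := la B).
  - apply lunit_iso2.
  - apply lunit_iso1.
  - apply lunit_nat.
Qed.

Lemma runit_inv_nat {A B : C} (f : hom A B) : rai B \o' f = (f <x> idm I) \o' rai A.
Proof.
  apply inverse_naturality with (p := ra A) (q := ra B).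
  - apply runit_iso2.
  - apply runit_iso1.
  - apply runit_nat.
Qed.

Lemma tens_unit_l_inj {A B : C} (f g : hom A B) : idm I <x> f = idm I <x> g -> f = g.
Proof.
  intros H. rewrite <- (comp_id_r f), <- (comp_id_r g), <- (lunit_iso2 M A). reassoc.
  rewrite <- !lunit_nat, H. reflexivity.
Qed.

Lemma tens_unit_r_inj {A B : C} (f g : hom A B) : f <x> idm I = g <x> idm I -> f = g.
Proof.
  intros H. rewrite <- (comp_id_r f), <- (comp_id_r g), <- (runit_iso2 M A). reassoc.
  rewrite <- !runit_nat, H. reflexivity.
Qed.

(* Kelly's coherence lemmas, derived from the pentagon and the triangle. *)
Lemma lunit_assoc (A B : C) : la (T A B) \o' al I A B = la A <x> idm B.
Proof.
  apply tens_unit_l_inj.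
  apply (split_epi_cancel (al I (T I A) B \o' (al I I A <x> idm B))
                          ((ali I I A <x> idm B) \o' ali I (T I A) B)).
  - reassoc. crewrite (tens_inverse_l B _ _ (assoc_iso2 M I I A)).
    rewrite comp_id_r. apply assoc_iso2.
  - rewrite tens_comp_r. reassoc.
    crewrite_rev (pentagon M I I A B). crewrite (triangle M I (T A B)).
    rewrite <- (tens_id M A B).
    crewrite_rev (assoc_nat M (ra I) (idm A) (idm B)). crewrite_rev (triangle M I A).
    crewrite (tens_comp_l (E := B) (idm I <x> la A) (al I I A)).
    crewrite (assoc_nat M (idm I) (la A) (idm B)). reflexivity.
Qed.

Lemma runit_assoc (A B : C) : (idm A <x> ra B) \o' al A B I = ra (T A B).
Proof.
  apply tens_unit_r_inj. apply (split_mono_cancel (al A B I) (ali A B I)).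
  { apply assoc_iso1. }
  rewrite tens_comp_l. reassoc. crewrite (assoc_nat M (idm A) (ra B) (idm I)).
  crewrite_rev (triangle M B I). crewrite (tens_comp_r (E := A) (idm B <x> la I) (al B I I)).
  crewrite_rev (pentagon M A B I I). crewrite_rev (assoc_nat M (idm A) (idm B) (la I)).
  rewrite (tens_id M A B). crewrite (triangle M (T A B) I). reflexivity.
Qed.

Lemma lunit_unit_runit : la I = ra I.
Proof.
  apply tens_unit_r_inj. rewrite <- lunit_assoc.
  assert (HlI : la (T I I) = idm I <x> la I).
  { apply (split_mono_cancel (la I) (lai I)).
    - apply lunit_iso1.
    - symmetry. apply lunit_nat. }
  rewrite HlI. apply triangle.
Qed.

Lemma lunit_inv_assoc (A B : C) : ali I A B \o' lai (T A B) = lai A <x> idm B.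
Proof.
  apply (split_mono_cancel (la A <x> idm B) (lai A <x> idm B)).
  - apply tens_inverse_l. apply lunit_iso1.
  - rewrite (tens_inverse_l B _ _ (lunit_iso2 M A)), comp_assoc, <- lunit_assoc. reassoc.
    crewrite (assoc_iso2 M I A B). rewrite comp_id_r. apply lunit_iso2.
Qed.

Lemma runit_assoc_inv (A B : C) : ra (T A B) \o' ali A B I = idm A <x> ra B.
Proof. rewrite <- runit_assoc, <- comp_assoc, assoc_iso2, comp_id_r. reflexivity. Qed.

Lemma triangle_assoc_inv (A B : C) :
  ali A I B \o' (idm A <x> lai B) = rai A <x> idm B.
Proof.
  apply (split_mono_cancel (ra A <x> idm B) (rai A <x> idm B)).
  - apply tens_inverse_l. apply runit_iso1.
  - rewrite (tens_inverse_l B _ _ (runit_iso2 M A)), comp_assoc, <- triangle. reassoc.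
    crewrite (assoc_iso2 M A I B). rewrite comp_id_r. apply tens_inverse_r. apply lunit_iso2.
Qed.

Lemma triangle_runit_inv (A B : C) :
  al A I B \o' (rai A <x> idm B) = idm A <x> lai B.
Proof.
  apply (split_mono_cancel (idm A <x> la B) (idm A <x> lai B)).
  - apply tens_inverse_r. apply lunit_iso1.
  - rewrite comp_assoc, triangle, <- !tens_comp, runit_iso2, lunit_iso2, !comp_id_l.
    reflexivity.
Qed.

Lemma assoc_inv_tens_assoc (A B D E : C) :
  ali A B (T D E) \o' (idm A <x> al B D E)
  = al (T A B) D E \o' (ali A B D <x> idm E) \o' ali A (T B D) E.
Proof.
  apply (split_mono_cancel (al A B (T D E)) (ali A B (T D E))).
  { apply assoc_iso1. }
  apply (split_epi_cancel (al A (T B D) E \o' (al A B D <x> idm E))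
                          ((ali A B D <x> idm E) \o' ali A (T B D) E)).
  - reassoc. crewrite (tens_inverse_l E _ _ (assoc_iso2 M A B D)).
    rewrite comp_id_r. apply assoc_iso2.
  - reassoc. rewrite assoc_iso2, comp_id_l. crewrite (assoc_iso1 M A (T B D) E).
    rewrite comp_id_r. crewrite (tens_inverse_l E _ _ (assoc_iso1 M A B D)).
    rewrite comp_id_r. symmetry. apply pentagon.
Qed.

Lemma assoc_tens_assoc_inv (A B D E : C) :
  al (T A B) D E \o' (ali A B D <x> idm E)
  = ali A B (T D E) \o' (idm A <x> al B D E) \o' al A (T B D) E.
Proof.
  rewrite assoc_inv_tens_assoc. reassoc.
  crewrite (assoc_iso1 M A (T B D) E). rewrite comp_id_r. reflexivity.
Qed.

Lemma tens_assoc_inv_assoc (A B D E : C) :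
  (idm A <x> ali B D E) \o' al A B (T D E)
  = al A (T B D) E \o' (al A B D <x> idm E) \o' ali (T A B) D E.
Proof.
  apply (split_epi_cancel (al (T A B) D E) (ali (T A B) D E)).
  { apply assoc_iso2. }
  reassoc. crewrite (pentagon M A B D E).
  rewrite (tens_inverse_r A _ _ (assoc_iso1 M B D E)), comp_id_l.
  crewrite (assoc_iso1 M (T A B) D E). rewrite comp_id_r. reflexivity.
Qed.

(** * Transposition along the unit and counit *)

Lemma snake1_tens (A X : C) :
  la (T A X) \o' (ep A <x> idm (T A X)) \o' ali A (A^*) (T A X)
  \o' (idm A <x> al (A^*) A X) \o' (idm A <x> (et A <x> idm X)) \o' (idm A <x> lai X)
  = 1.
Proof.
  crewrite (assoc_inv_tens_assoc A (A^*) A X). rewrite <- (tens_id M A X).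
  crewrite_rev (assoc_nat M (ep A) (idm A) (idm X)). rewrite lunit_assoc.
  crewrite (assoc_inv_nat (idm A) (et A) (idm X)). crewrite (triangle_assoc_inv A X).
  rewrite <- !tens_comp_l, snake1. reflexivity.
Qed.

Lemma snake2_tens_r (A Y : C) :
  (idm (A^*) <x> la Y) \o' (idm (A^*) <x> (ep A <x> idm Y))
  \o' (idm (A^*) <x> ali A (A^*) Y) \o' al (A^*) A (T (A^*) Y)
  \o' (et A <x> idm (T (A^*) Y)) \o' lai (T (A^*) Y) = 1.
Proof.
  crewrite (tens_assoc_inv_assoc (A^*) A (A^*) Y).
  crewrite_rev (assoc_nat M (idm (A^*)) (ep A) (idm Y)).
  crewrite (triangle M (A^*) Y). rewrite <- (tens_id M (A^*) Y).
  crewrite (assoc_inv_nat (et A) (idm (A^*)) (idm Y)). crewrite (lunit_inv_assoc (A^*) Y).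
  rewrite <- !tens_comp_l, snake2. reflexivity.
Qed.

Lemma snake2_tens_l (A X : C) :
  ra (T X (A^*)) \o' (idm (T X (A^*)) <x> ep A) \o' al (T X (A^*)) A (A^*)
  \o' (ali X (A^*) A <x> idm (A^*)) \o' ((idm X <x> et A) <x> idm (A^*))
  \o' (rai X <x> idm (A^*)) = 1.
Proof.
  crewrite (assoc_tens_assoc_inv X (A^*) A (A^*)). rewrite <- (tens_id M X (A^*)).
  crewrite_rev (assoc_inv_nat (idm X) (idm (A^*)) (ep A)). crewrite (runit_assoc_inv X (A^*)).
  crewrite (assoc_nat M (idm X) (et A) (idm (A^*))). crewrite (triangle_runit_inv X (A^*)).
  rewrite <- !tens_comp_r, snake2. reflexivity.
Qed.

Definition uncurry {A Y X : C} (h : hom X (T (A^*) Y)) : hom (T A X) Y :=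
  la Y \o' (ep A <x> idm Y) \o' ali A (A^*) Y \o' (idm A <x> h).

Definition curry {A Y X : C} (g : hom (T A X) Y) : hom X (T (A^*) Y) :=
  (idm (A^*) <x> g) \o' al (A^*) A X \o' (et A <x> idm X) \o' lai X.

Definition pairing {A Z : C} (h : hom Z A) : hom (T Z (A^*)) I :=
  ep A \o' (h <x> idm (A^*)).

Definition unpairing {A Z : C} (g : hom (T Z (A^*)) I) : hom Z A :=
  la A \o' (g <x> idm A) \o' ali Z (A^*) A \o' (idm Z <x> et A) \o' rai Z.

Lemma curry_uncurry {A Y X : C} (h : hom X (T (A^*) Y)) : curry (uncurry h) = h.
Proof.
  unfold curry, uncurry. rewrite !tens_comp_r. reassoc.
  crewrite_rev (assoc_nat M (idm (A^*)) (idm A) h). rewrite (tens_id M (A^*) A).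
  crewrite (tens_interchange (et A) h). crewrite_rev (lunit_inv_nat h).
  rewrite snake2_tens_r, comp_id_l. reflexivity.
Qed.

Lemma uncurry_curry {A Y X : C} (g : hom (T A X) Y) : uncurry (curry g) = g.
Proof.
  unfold curry, uncurry. rewrite !tens_comp_r. reassoc.
  crewrite (assoc_inv_nat (idm A) (idm (A^*)) g). rewrite (tens_id M A (A^*)).
  crewrite_rev (tens_interchange (ep A) g). crewrite (lunit_nat M g).
  etransitivity; [| exact (comp_eq_id_r g _ (snake1_tens A X))]. reassoc. reflexivity.
Qed.

Lemma uncurry_nat {A Y X X' : C} (h : hom X (T (A^*) Y)) (k : hom X' X) :
  uncurry (h \o' k) = uncurry h \o' (idm A <x> k).
Proof. unfold uncurry. rewrite tens_comp_r. reassoc. reflexivity. Qed.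

Lemma unpairing_pairing {A Z : C} (h : hom Z A) : unpairing (pairing h) = h.
Proof.
  unfold unpairing, pairing. rewrite tens_comp_l. reassoc.
  crewrite_rev (assoc_inv_nat h (idm (A^*)) (idm A)). rewrite (tens_id M (A^*) A).
  crewrite_rev (tens_interchange h (et A)). crewrite_rev (runit_inv_nat h).
  rewrite snake1, comp_id_l. reflexivity.
Qed.

Lemma pairing_unpairing {A Z : C} (g : hom (T Z (A^*)) I) : pairing (unpairing g) = g.
Proof.
  unfold unpairing, pairing. rewrite !tens_comp_l. reassoc.
  rewrite <- lunit_assoc. reassoc. crewrite_rev (lunit_nat M (ep A)).
  crewrite (assoc_nat M g (idm A) (idm (A^*))). rewrite (tens_id M A (A^*)).
  crewrite (tens_interchange g (ep A)). rewrite lunit_unit_runit. crewrite (runit_nat M g).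
  etransitivity; [| exact (comp_eq_id_r g _ (snake2_tens_l A Z))]. reassoc. reflexivity.
Qed.

Lemma pairing_nat {A Z Z' : C} (h : hom Z A) (k : hom Z' Z) :
  pairing (h \o' k) = pairing h \o' (k <x> idm (A^*)).
Proof. unfold pairing. rewrite tens_comp_l. reassoc. reflexivity. Qed.

(** * Internal homs *)

Definition is_internal_hom (A Y D : C) : Prop :=
  exists Phi : forall X, hom X D -> hom (T A X) Y,
    (forall X X' (h : hom X D) (k : hom X' X),
        Phi X' (h \o' k) = Phi X h \o' (idm A <x> k)) /\
    (forall X (h h' : hom X D), Phi X h = Phi X h' -> h = h') /\
    (forall X (g : hom (T A X) Y), exists h, Phi X h = g).

(* The Yoneda argument. *)
Lemma is_internal_hom_unique {A Y D D' : C} :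
  is_internal_hom A Y D -> is_internal_hom A Y D' -> iso D D'.
Proof.
  intros [Phi [Phi_nat [Phi_inj Phi_surj]]] [Psi [Psi_nat [Psi_inj Psi_surj]]].
  destruct (Psi_surj D (Phi D (idm D))) as [u Hu].
  destruct (Phi_surj D' (Psi D' (idm D'))) as [v Hv].
  exists u, v. split.
  - apply Phi_inj. rewrite Phi_nat, Hv, <- Psi_nat, comp_id_l. exact Hu.
  - apply Psi_inj. rewrite Psi_nat, Hu, <- Phi_nat, comp_id_l. exact Hv.
Qed.

Lemma ihom_is_internal_hom (A Y : C) : is_internal_hom A Y (ihom K A Y).
Proof.
  exists (fun X => @uncurry A Y X). split; [| split].
  - intros X X' h k. apply uncurry_nat.
  - intros X h h' H. rewrite <- (curry_uncurry h), <- (curry_uncurry h'), H. reflexivity.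
  - intros X g. exists (curry g). apply uncurry_curry.
Qed.

Lemma is_internal_hom_iso_l {A A' Y D : C} :
  iso A' A -> is_internal_hom A Y D -> is_internal_hom A' Y D.
Proof.
  intros [j [j' [Hj'j Hjj']]] [Phi [Phi_nat [Phi_inj Phi_surj]]].
  exists (fun X h => Phi X h \o' (j <x> idm X)). split; [| split].
  - intros X X' h k. rewrite Phi_nat. reassoc.
    crewrite (tens_interchange j k). reflexivity.
  - intros X h h' H. apply Phi_inj.
    apply (split_epi_cancel _ _ _ _ (tens_inverse_l X _ _ Hjj') H).
  - intros X g. destruct (Phi_surj X (g \o' (j' <x> idm X))) as [h Hh].
    exists h. rewrite Hh. reassoc.
    crewrite (tens_inverse_l X _ _ Hj'j). apply comp_id_r.
Qed.

(* Uses [hom(Z, B) = hom(Z (x) B^*, I)] with [Z = A (x) X], then moves [B^*]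
   to the front. *)
Lemma is_internal_hom_transpose {A B D : C} :
  is_internal_hom A B D -> is_internal_hom (T (B^*) A) I D.
Proof.
  intros [Phi [Phi_nat [Phi_inj Phi_surj]]].
  set (tau := fun X => sym M (B^*) (T A X) \o' al (B^*) A X).
  set (tau_inv := fun X => ali (B^*) A X \o' sym M (T A X) (B^*)).
  assert (tau_tau_inv : forall X, tau X \o' tau_inv X = 1).
  { intros X. unfold tau, tau_inv. reassoc.
    crewrite (assoc_iso2 M (B^*) A X). rewrite comp_id_r. apply sym_inv. }
  assert (tau_inv_tau : forall X, tau_inv X \o' tau X = 1).
  { intros X. unfold tau, tau_inv. reassoc.
    crewrite (sym_inv M (B^*) (T A X)). rewrite comp_id_r. apply assoc_iso1. }
  assert (tau_nat : forall X X' (k : hom X' X),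
             tau X \o' (idm (T (B^*) A) <x> k) = ((idm A <x> k) <x> idm (B^*)) \o' tau X').
  { intros X X' k. unfold tau. rewrite <- (tens_id M (B^*) A).
    crewrite (assoc_nat M (idm (B^*)) (idm A) k).
    crewrite (sym_nat M (idm (B^*)) (idm A <x> k)). reflexivity. }
  exists (fun X h => pairing (Phi X h) \o' tau X). split; [| split].
  - intros X X' h k. rewrite Phi_nat, pairing_nat. reassoc.
    crewrite (tau_nat X X' k). reflexivity.
  - intros X h h' H. apply Phi_inj.
    rewrite <- (unpairing_pairing (Phi X h)), <- (unpairing_pairing (Phi X h')).
    f_equal. exact (split_epi_cancel _ _ _ _ (tau_tau_inv X) H).
  - intros X g. destruct (Phi_surj X (unpairing (g \o' tau_inv X))) as [h Hh].
    exists h. rewrite Hh, pairing_unpairing. reassoc.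
    crewrite (tau_inv_tau X). apply comp_id_r.
Qed.

Lemma reflexive_self_dual {R : C} : reflexive K R -> self_dual K R.
Proof.
  intros HR.
  assert (Hhom : is_internal_hom R I (ihom K R R)).
  { apply (is_internal_hom_iso_l HR).
    apply is_internal_hom_transpose, ihom_is_internal_hom. }
  pose proof (is_internal_hom_unique Hhom (ihom_is_internal_hom R I)) as Hunit.
  exact (iso_trans HR (iso_trans Hunit (iso_runit (R^*)))).
Qed.

End CompactClosed.

Theorem mainTheorem1 (C : Category) (M : SymMonoidal C) (K : CompactClosed M)
  (R : C) :
  reflexive K R <-> (self_dual K R /\ self_similar M R).
Proof.
  unfold reflexive, self_similar, ihom. split.
  - intros HR. pose proof (reflexive_self_dual K HR) as Hdual. split.
    + exact Hdual.
    + exact (iso_trans HR (iso_tens (iso_sym Hdual) (iso_refl R))).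
  - intros [Hdual Hsim]. exact (iso_trans Hsim (iso_tens Hdual (iso_refl R))).
Qed.
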